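(* In the construction below, if there exists an admissible solution $E^*$ of the constructed CSCN instance, then there exists a connected subgraph $H$ of $G'$ with $S\subseteq V(H)$ and $|E(H)|\le 2k$ (an admissible solution of the Steiner Tree instance).
   Context: Let $G'=(V',E')$ be a connected undirected graph, let $S=\{u_1,\dots,u_s\}\subseteq V'$ with $s=|S|$, and let $k\ge 0$ be a real number with $|E'|\ge 2k$. (Viewing every edge of $G'$ as having weight $\frac12$, the Steiner Tree instance asks for a connected subgraph $H$ of $G'$ with $S\subseteq V(H)$ and total edge weight at most $k$, i.e. $|E(H)|\le 2k$.) Let $t\ge 1$ be an integer. Let $V = V'\cup\{v_{i,j} : 1\le i\le s,\ 1\le j\le t\}$ (the $v_{i,j}$ are new vertices) and let $E$ be the set of all pairs of vertices of $V$ (edges undirected). Define $w^*:E\to\mathbb{R}$ by: $w^*(\{v_{i,j},u_i\})=1$ for all $i,j$; $w^*(\{v_{i,j},u\})=0$ for every $u\in V\setminus\{u_i\}$; $w^*(e)=\frac12$ for every $e\in E'$; $w^*(\{u,u'\})=0$ for $u,u'\in V'$ with $\{u,u'\}\notin E'$. Set $A=\frac{st+k}{st+2k}$ and $B=\frac{\frac12(|E'|-2k)}{st+2k}$. For nonempty $E^*\subseteq E$ let $\alpha(E^* )=\frac{\sum_{e\in E^*}w^*(e)}{|E^*|}$ and $\beta(E^* )=\frac{\sum_{e\in E\setminus E^*}w^*(e)}{|E^*|}$. The graph induced by $E^*$ has vertex set the vertices incident to some edge of $E^*$ and edge set $E^*$. An admissible solution of the constructed CSCN instance is a nonempty $E^*\subseteq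 E$ whose induced graph is connected and which satisfies $\alpha(E^* )\ge A$ and $\beta(E^* )\le B$. *)

From mathcomp Require Import all_boot all_order all_algebra.
Set Implicit Arguments. Unset Strict Implicit. Unset Printing Implicit Defensive.
Import Order.TTheory GRing.Theory Num.Theory.
Local Open Scope ring_scope.

(* Graphs are given by a vertex set W : {set T} and an edge set
   F : {set {set T}} (edges are 2-element subsets). *)

Definition F_adj (T : finType) (F : {set {set T}}) : rel T :=
  fun x y => [exists e in F, (x \in e) && (y \in e)].

Definition is_connected (T : finType) (W : {set T}) (F : {set {set T}}) : Prop :=
  W != set0 /\ {in W &, forall x y, connect (F_adj F) x y}.

Definition induced_vertices (T : finType) (F : {set {set T}}) : {set T} :=
  \bigcup_(e in F) e.

(* vertex set V = V' + {v_{i,j}} ; inl x = x in V', inr (i,j) = v_{i,j} *)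
Definition Vc (V' : finType) (s t : nat) : finType := (V' + ('I_s * 'I_t))%type.

Definition all_pairs (T : finType) : {set {set T}} := [set e : {set T} | #|e| == 2%N].

Definition lift_edge (V' : finType) (s t : nat) (f : {set V'}) : {set Vc V' s t} :=
  [set inl x | x in f].

Definition wstar (R : realFieldType) (V' : finType) (s t : nat)
  (E' : {set {set V'}}) (u : 'I_s -> V') (e : {set Vc V' s t}) : R :=
  if [exists i : 'I_s, exists j : 'I_t,
        e == [set (inr (i, j) : Vc V' s t); inl (u i)]] then 1
  else if e \in [set lift_edge s t f | f in E'] then 1 / 2
  else 0.

Definition alpha (R : realFieldType) (T : finType) (w : {set T} -> R)
  (Es : {set {set T}}) : R :=
  (\sum_(e in Es) w e) / (#|Es|%:R).

Definition beta (R : realFieldType) (T : finType) (w : {set T} -> R)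
  (Es : {set {set T}}) : R :=
  (\sum_(e in all_pairs T :\: Es) w e) / (#|Es|%:R).

(* The weight of an edge set E* is x + y/2, where x, y, z count its edges
   {v_ij, u_i} (weight 1), its copies of edges of G' (weight 1/2) and its
   remaining edges (weight 0); the weight outside E* is (s t - x) + (|E'| - y)/2.
   Clearing denominators, the bound on alpha alone gives y/2 + z <= k, and
   together with the bound on beta it forces x = s t and z = 0.  So E* consists
   of all pendant edges {v_ij, u_i} plus at most 2k copies of edges of G', and
   collapsing every v_ij onto u_i maps the connected graph of E* onto a
   connected subgraph of G' spanned by these copies and containing all u_i.
   For s = 0 a single vertex is a solution. *)

From mathcomp Require Import all_boot all_order all_algebra.
From mathcomp Require Import lra.
Import Order.TTheory GRing.Theory Num.Theory.
Local Open Scope ring_scope.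

Lemma sum_indicator (R : pzSemiRingType) (T : finType) (X H : {set T}) :
  \sum_(x in X) ((x \in H)%:R : R) = #|X :&: H|%:R.
Proof.
rewrite -sum1_card natr_sum [LHS]big_mkcond [RHS]big_mkcond; apply: eq_bigr => x _.
by rewrite inE; case: (x \in X); case: (x \in H).
Qed.

Lemma connect_homo (T T' : finType) (e : rel T) (e' : rel T') (g : T -> T') :
  (forall a b, e a b -> connect e' (g a) (g b)) ->
  forall a b, connect e a b -> connect e' (g a) (g b).
Proof.
move=> homo_e a b /connectP[p + ->]; elim: p a => [|c p IHp] a /=.
  by rewrite connect0.
by case/andP=> /homo_e eac /IHp; apply: connect_trans.
Qed.

Lemma is_connected_set1 (T : finType) (v : T) : is_connected [set v] set0.
Proof.
split; first by apply/set0Pn; exists v; rewrite inE.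
by move=> a b /set1P-> /set1P->; apply: connect0.
Qed.

Lemma ratio_bounds_counts (R : realFieldType) (st n k x y z : R) :
  0 < st -> 0 <= k -> 0 <= n ->
  0 <= x <= st -> 0 <= y -> 0 <= z -> 0 < x + y + z ->
  (st + k) / (st + 2 * k) <= (x + 1/2 * y) / (x + y + z) ->
  ((st - x) + 1/2 * (n - y)) / (x + y + z) <= (1/2 * (n - 2 * k)) / (st + 2 * k) ->
  [/\ x = st, z = 0 & y <= 2 * k].
Proof.
move=> st_gt0 k_ge0 n_ge0 /andP[x_ge0 x_le] y_ge0 z_ge0 m_gt0.
have D_gt0 : 0 < st + 2 * k by lra.
rewrite ler_pdivlMr // mulrAC ler_pdivrMr // => alpha.
rewrite ler_pdivlMr // mulrAC ler_pdivrMr // => beta.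
(* Expanded, [alpha] reads k x >= st (y/2 + z) + k z, while k x <= k st. *)
have yz_le : 1/2 * y + z <= k.
  have : 0 <= st * (k - (1/2 * y + z)) by nra.
  by rewrite pmulr_rge0 // subr_ge0.
(* Sum [beta], [alpha] and [n] times [yz_le]; the leftover terms are >= 0. *)
have sum_le0 : (st - x) * (st + k + n / 2) + st * z <= 0 by nra.
have : (st - x) * (st + k + n / 2) <= 0 by nra.
rewrite pmulr_lle0 ?subr_le0; last by lra.
have : st * z <= 0 by nra.
by rewrite pmulr_rle0 // => z_le0 x_ge; split; lra.
Qed.

Section Construction.

Context {V' : finType} {s t : nat} (E' : {set {set V'}}) (u : 'I_s -> V').

Local Notation T := (Vc V' s t).

Definition heavy_edge (p : 'I_s * 'I_t) : {set T} := [set inr p; inl (u p.1)].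

Definition heavy_edges : {set {set T}} := heavy_edge @: setT.

Definition light_edges : {set {set T}} := @lift_edge V' s t @: E'.

Lemma heavy_edge_inj : injective heavy_edge.
Proof.
move=> p q eq_pq; have : (inr p : T) \in heavy_edge q by rewrite -eq_pq !inE eqxx.
by rewrite !inE => /orP[/eqP[] | /eqP].
Qed.

Lemma lift_edge_inj : injective (@lift_edge V' s t).
Proof. by apply: imset_inj => ? ? []. Qed.

Lemma card_heavy_edges : #|heavy_edges| = (s * t)%N.
Proof. by rewrite card_imset ?cardsT ?card_prod ?card_ord //; apply: heavy_edge_inj. Qed.

Lemma card_light_edges : #|light_edges| = #|E'|.
Proof. by rewrite card_imset //; apply: lift_edge_inj. Qed.

Lemma heavy_notin_light e : e \in heavy_edges -> e \notin light_edges.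
Proof.
case/imsetP=> p _ ->; apply/imsetP=> -[f _ /setP/(_ (inr p))].
by rewrite !inE eqxx => /esym/imsetP[].
Qed.

Lemma heavy_edges_sub_all_pairs : heavy_edges \subset all_pairs T.
Proof. by apply/subsetP=> _ /imsetP[p _ ->]; rewrite inE cards2. Qed.

Hypothesis E'2 : forall f, f \in E' -> #|f| = 2%N.

Lemma light_edges_sub_all_pairs : light_edges \subset all_pairs T.
Proof.
apply/subsetP=> _ /imsetP[f fE' ->].
by rewrite inE card_imset ?E'2 // => ? ? [].
Qed.

Context {R : realFieldType}.

Lemma wstarE e :
  wstar R E' u e = (e \in heavy_edges)%:R + 1/2 * (e \in light_edges)%:R.
Proof.
rewrite /wstar.
have -> : [exists i, exists j, e == [set (inr (i, j) : T); inl (u i)]]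
          = (e \in heavy_edges).
  apply/existsP/imsetP => [[i /existsP[j /eqP->]] | [[i j] _ ->]].
    by exists (i, j).
  by exists i; apply/existsP; exists j.
have [/(heavy_notin_light e)/negbTE-> | _] := boolP (e \in heavy_edges).
  by rewrite mulr0 addr0.
by case: (e \in light_edges); rewrite ?mulr1 ?mulr0 add0r.
Qed.

Lemma sum_wstar (X : {set {set T}}) :
  \sum_(e in X) wstar R E' u e
  = #|X :&: heavy_edges|%:R + 1/2 * #|X :&: light_edges|%:R.
Proof.
by rewrite (eq_bigr _ (fun e _ => wstarE e)) big_split -mulr_sumr /= !sum_indicator.
Qed.

Lemma card_heavy_light_split (X : {set {set T}}) :
  #|X| = (#|X :&: heavy_edges| + #|X :&: light_edges|
          + #|X :\: (heavy_edges :|: light_edges)|)%N.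
Proof.
rewrite -(cardsID (heavy_edges :|: light_edges) X) setIUr cardsU.
suff -> : X :&: heavy_edges :&: (X :&: light_edges) = set0 by rewrite cards0 subn0.
apply/setP=> e; rewrite !inE; case eH: (e \in heavy_edges); last by rewrite !andbF.
by rewrite (negbTE (heavy_notin_light e eH)) !andbF.
Qed.

Lemma sum_wstar_compl (X : {set {set T}}) : X \subset all_pairs T ->
  \sum_(e in all_pairs T :\: X) wstar R E' u e
  = ((s * t)%N%:R - #|X :&: heavy_edges|%:R)
    + 1/2 * (#|E'|%:R - #|X :&: light_edges|%:R).
Proof.
move=> X_pairs; rewrite sum_wstar.
have compl_sub (A : {set {set T}}) :
    A \subset all_pairs T -> (all_pairs T :\: X) :&: A = A :\: X.
  move=> A_pairs; apply/setP=> e; rewrite in_setI !in_setD.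
  by case eA: (e \in A); rewrite ?andbF // (subsetP A_pairs e eA) andbT.
rewrite !compl_sub ?heavy_edges_sub_all_pairs ?light_edges_sub_all_pairs //.
rewrite !cardsD !(setIC _ X) !natrB ?subset_leq_card ?subsetIr //.
by rewrite card_heavy_edges card_light_edges.
Qed.

Lemma admissible_edge_counts (k : R) (Es : {set {set T}}) :
  (0 < s * t)%N -> 0 <= k -> Es \subset all_pairs T -> Es != set0 ->
  alpha (wstar R E' u) Es >= ((s * t)%N%:R + k) / ((s * t)%N%:R + 2 * k) ->
  beta (wstar R E' u) Es <= (1/2 * (#|E'|%:R - 2 * k)) / ((s * t)%N%:R + 2 * k) ->
  [/\ heavy_edges \subset Es, Es \subset heavy_edges :|: light_edges
    & #|Es :&: light_edges|%:R <= 2 * k].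
Proof.
move=> st_gt0 k_ge0 Es_pairs Es_neq0 alpha_ge beta_le.
move: alpha_ge beta_le; rewrite /alpha /beta sum_wstar sum_wstar_compl //.
rewrite (card_heavy_light_split Es) !natrD.
set x := #|Es :&: heavy_edges|; set y := #|Es :&: light_edges|.
set z := #|Es :\: (heavy_edges :|: light_edges)| => alpha_ge beta_le.
have x_le : (x <= s * t)%N by rewrite -card_heavy_edges subset_leq_card ?subsetIr.
have m_gt0 : (0 < x + y + z)%N by rewrite -card_heavy_light_split card_gt0.
have [x_eq z_eq y_le] : [/\ x%:R = (s * t)%N%:R :> R, z%:R = 0 :> R & y%:R <= 2 * k].
  apply: (@ratio_bounds_counts R _ #|E'|%:R) => //;
    by rewrite -?natrD ?ltr0n ?ler0n ?ler_nat.
split=> //.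
- apply/setIidPr/eqP.
  by rewrite eqEcard subsetIr card_heavy_edges -/x -(ler_nat R) x_eq lexx.
- by rewrite -setD_eq0 -cards_eq0 -/z -(pnatr_eq0 R) z_eq.
Qed.

Definition project (v : T) : V' := match v with inl a => a | inr p => u p.1 end.

Lemma connect_project (Es : {set {set T}}) (a b : T) :
  Es \subset heavy_edges :|: light_edges -> connect (F_adj Es) a b ->
  connect (F_adj (E' :&: @lift_edge V' s t @^-1: Es)) (project a) (project b).
Proof.
move=> Es_sub; apply: connect_homo => {}a {}b /existsP[e /and3P[eEs ae be]].
case/setUP: (subsetP Es_sub e eEs) => [/imsetP[p _ e_p] | /imsetP[f fE' e_f]].
  by move: ae be; rewrite e_p !inE => /orP[]/eqP-> /orP[]/eqP->; apply: connect0.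
move: ae be; rewrite e_f => /imsetP[a' a'f ->] /imsetP[b' b'f ->].
apply: connect1; apply/existsP; exists f.
by rewrite !inE fE' -e_f eEs a'f b'f.
Qed.

Lemma card_unlifted_edges (Es : {set {set T}}) :
  #|E' :&: @lift_edge V' s t @^-1: Es| = #|Es :&: light_edges|.
Proof.
rewrite -(card_imset _ lift_edge_inj); apply: eq_card => e.
apply/imsetP/setIP => [[f /setIP[fE' /[!inE] fEs] ->] | [eEs /imsetP[f fE' e_f]]].
  by split=> //; apply: imset_f.
by exists f => //; rewrite !inE fE' -e_f.
Qed.

Lemma terminal_in_heavy_edges (Es : {set {set T}}) (i : 'I_s) (j : 'I_t) :
  heavy_edges \subset Es -> (inl (u i) : T) \in induced_vertices Es.
Proof.
move=> heavy_sub; apply/bigcupP; exists (heavy_edge (i, j)).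
  by apply: (subsetP heavy_sub); apply: imset_f.
by rewrite !inE eqxx orbT.
Qed.

End Construction.

Theorem lemma4 (R : realFieldType) (V' : finType) (E' : {set {set V'}})
  (s t : nat) (u : 'I_s -> V') (k : R)
  (hE' : forall e, e \in E' -> #|e| = 2%N)
  (hconn : is_connected [set: V'] E')
  (hu : injective u)
  (hk : 0 <= k) (hEk : 2 * k <= #|E'|%:R)
  (ht : (1 <= t)%N)
  (Es : {set {set Vc V' s t}})
  (hEsE : Es \subset all_pairs (Vc V' s t))
  (hEs0 : Es != set0)
  (hEsconn : is_connected (induced_vertices Es) Es)
  (halpha : alpha (wstar R E' u) Es >=
            ((s * t)%N%:R + k) / ((s * t)%N%:R + 2 * k))
  (hbeta : beta (wstar R E' u) Es <=
           (1 / 2 * (#|E'|%:R - 2 * k)) / ((s * t)%N%:R + 2 * k)) :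
  exists (W : {set V'}) (F : {set {set V'}}),
    [/\ F \subset E',
        (forall e, e \in F -> e \subset W),
        is_connected W F,
        (forall i : 'I_s, u i \in W) &
        #|F|%:R <= 2 * k].
Proof.
have [s0 | s_gt0] := posnP s.
  case: hconn => /set0Pn[v _] _; exists [set v], set0; split.
  - exact: sub0set.
  - by move=> e; rewrite inE.
  - exact: is_connected_set1.
  - by move=> i; have := ltn_ord i; rewrite {2}s0.
  - by rewrite cards0 mulr_ge0.
have st_gt0 : (0 < s * t)%N by rewrite muln_gt0 s_gt0.
have [heavy_sub Es_sub light_le] :=
  admissible_edge_counts E' u hE' k Es st_gt0 hk hEsE hEs0 halpha hbeta.
have terminal_in i : u i \in inl @^-1: induced_vertices Es.
  by rewrite inE (terminal_in_heavy_edges u Es i (Ordinal ht)).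
exists (inl @^-1: induced_vertices Es), (E' :&: @lift_edge V' s t @^-1: Es).
split=> //.
- exact: subsetIl.
- move=> f /setIP[_ /[!inE] fEs]; apply/subsetP=> v vf; rewrite inE.
  by apply/bigcupP; exists (lift_edge s t f); rewrite // imset_f.
- split; first by apply/set0Pn; exists (u (Ordinal s_gt0)).
  move=> a b /[!inE] a_in b_in.
  exact: (connect_project E' u Es (inl a) (inl b) Es_sub
                          (hEsconn.2 _ _ a_in b_in)).
- by rewrite card_unlifted_edges.
Qed.
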